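(* Let $\{(x^r,z^r,\lambda^r)\}_{r\ge 0}$ be generated by Algorithm PGC (described in the context). Then there exist vectors $\zeta^r\in\mathbb{R}^{MN}$, $r\ge 1$, whose $i$-th $M$-dimensional blocks satisfy $\zeta^{r}_i\in\partial h_i(x^{r}_i)$ for all $i\in\mathcal{V}$, such that for all $r\ge 1$ $$x^{r+1}-x^r+\Upsilon^{-1}(\zeta^{r+1}-\zeta^r)=\Upsilon^{-1}\big(-G(x^r)+G(x^{r-1})\big)+(W\otimes I_M)x^r-\tfrac12\big(I_{MN}+W\otimes I_M\big)x^{r-1}.$$ Equivalently, for every agent $i$ and all $r\ge 1$, $$x^{r+1}_i-x^r_i+\tfrac{1}{\beta_i}(\zeta^{r+1}_i-\zeta^r_i)=\tfrac{1}{\beta_i}\big(-\nabla g_i(x^r_i)+\nabla g_i(x^{r-1}_i)\big)+\frac{\sum_{j\in\mathcal N_i}\hat\rho_{ij}x^r_j+\frac{\omega_i}{2}x^r_i}{\sum_{j\in\mathcal N_i}\hat\rho_{ij}+\omega_i/2}-\frac12\Big(x^{r-1}_i+\frac{\sum_{j\in\mathcal N_i}\hat\rho_{ij}x^{r-1}_j+\frac{\omega_i}{2}x^{r-1}_i}{\sum_{j\in\mathcal N_i}\hat\rho_{ij}+\omega_i/2}\Big).$$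
   Context: Let $N,M\ge1$ and let $\mathcal G=(\mathcal V,\mathcal E)$ be a connected undirected graph with $\mathcal V=\{1,\dots,N\}$ and $E=|\mathcal E|$ edges. Let $\mathcal A$ be the set of $2E$ directed arcs containing both $(i,j)$ and $(j,i)$ for every edge $\{i,j\}\in\mathcal E$, and $\mathcal N_i=\{j:(i,j)\in\mathcal A\}$. For each $i$, $g_i:\mathbb R^M\to\mathbb R$ is convex and differentiable and $h_i:\mathbb R^M\to\mathbb R\cup\{+\infty\}$ is convex; $f_i=g_i+h_i$. Variables: $x=(x_1;\dots;x_N)\in\mathbb R^{NM}$, $z=(z_{ij})_{(i,j)\in\mathcal A}\in\mathbb R^{2EM}$ (arcs in a fixed order). Matrices $A_1,A_2\in\mathbb R^{2EM\times NM}$ consist of $2E\times N$ blocks of size $M\times M$: if $z_{ij}$ is the $q$-th block of $z$, then block $(q,i)$ of $A_1$ and block $(q,j)$ of $A_2$ equal $I_M$, all other blocks are zero. $A=[A_1;A_2]$, $B=[-I_{2EM};-I_{2EM}]$, $M_+=A_1^T+A_2^T$. $h(x)=\sum_i h_i(x_i)$, $G(x)=[\nabla g_1(x_1);\dots;\nabla g_N(x_N)]$. Parameters: $\rho_{ij}>0$ for each $(i,j)\in\mathcal A$, $\hat\rho_{ij}=(\rho_{ij}+\rho_{ji})/2$; $\Xi\in\mathbb R^{2E\times2E}$ diagonal with $\Xi[q,q]=\rho_{ij}$ if $z_{ij}$ is the $q$-th block of $z$; $\Gamma=\mathrm{blkdiag}(\Xi\otimes I_M,\Xi\otimes I_M)$;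 $\|v\|_S^2=v^TSv$. $\omega_i\ge0$, $\Omega=\mathrm{blkdiag}(\omega_1I_M,\dots,\omega_NI_M)$. $\beta_i=2(\sum_{j\in\mathcal N_i}\hat\rho_{ij}+\omega_i/2)$, $\Upsilon=\mathrm{diag}(\beta_1,\dots,\beta_N)\otimes I_M$. $W\in\mathbb R^{N\times N}$ is given by $W[i,j]=(\rho_{ij}+\rho_{ji})/\beta_i$ if $(i,j)\in\mathcal A$, $W[i,i]=\omega_i/\beta_i$, and $W[i,j]=0$ otherwise. Algorithm PGC: choose $x^0$, $\lambda^0\in\mathbb R^{4EM}$, $z^0$ with $B^T\lambda^0=0$ and $z^0=\frac12M_+^Tx^0$. For $r\ge0$: $x^{r+1}=\arg\min_x\{\langle G(x^r),x-x^r\rangle+h(x)+\langle\lambda^r,Ax+Bz^r\rangle+\frac12\|Ax+Bz^r\|_\Gamma^2+\frac12\|x-x^r\|_\Omega^2\}$; $z^{r+1}=\arg\min_z\frac12\|Ax^{r+1}+Bz+\Gamma^{-1}\lambda^r\|_\Gamma^2$; $\lambda^{r+1}=\lambda^r+\Gamma(Ax^{r+1}+Bz^{r+1})$. *)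

From HB Require Import structures.
From mathcomp Require Import all_boot all_order all_algebra.
From mathcomp Require Import all_classical all_reals all_analysis.
Set Implicit Arguments. Unset Strict Implicit. Unset Printing Implicit Defensive.
Import Order.TTheory GRing.Theory Num.Theory.
Import numFieldNormedType.Exports.
Local Open Scope ring_scope.

Section PGC.
Variables (R : realType) (N M : nat).

Notation blk := 'rV[R]_M.

Definition dotv (u v : blk) : R := (u *m v^T) 0 0.
Definition sqn (u : blk) : R := dotv u u.

Definition convex_real (g : blk -> R) : Prop :=
  forall (u v : blk) (t : R), 0 <= t <= 1 ->
    g (t *: u + (1 - t) *: v) <= t * g u + (1 - t) * g v.

Definition convex_ext (h : blk -> \bar R) : Prop :=
  forall (u v : blk) (t : R), 0 < t < 1 ->
    (h (t *: u + (1 - t) *: v)%R <= t%:E * h u + (1 - t)%:E * h v)%E.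

Definition proper_ext (h : blk -> \bar R) : Prop :=
  (forall u, h u != -oo%E) /\ (exists u, h u \is a fin_num).

Definition is_gradient (g : blk -> R) (dg : blk -> blk) : Prop :=
  forall u, differentiable g u /\ forall v, 'd g u v = dotv (dg u) v.

Definition subdiff (h : blk -> \bar R) (u zeta : blk) : Prop :=
  forall v, (h u + (dotv zeta (v - u)%R)%:E <= h v)%E.

Variable adj : rel 'I_N.

Definition simple_undirected_connected : Prop :=
  symmetric adj /\ irreflexive adj /\ forall i j, connect adj i j.

(* the set of directed arcs (i,j), both orientations of every edge *)
Definition darc := {p : 'I_N * 'I_N | adj p.1 p.2}.
Definition src (a : darc) : 'I_N := (val a).1.
Definition dst (a : darc) : 'I_N := (val a).2.

(* x in R^{NM} as N blocks; z in R^{2EM} as darc-indexed blocks;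
   lambda in R^{4EM} = (first 2E blocks, last 2E blocks) *)
Definition xvec := 'I_N -> blk.
Definition zvec := darc -> blk.
Definition lvec := (zvec * zvec)%type.

Definition ladd (u v : lvec) : lvec :=
  (fun a => u.1 a + v.1 a, fun a => u.2 a + v.2 a).
Definition Aop (x : xvec) : lvec := (fun a => x (src a), fun a => x (dst a)).
Definition Bop (z : zvec) : lvec := (fun a => - z a, fun a => - z a).
Definition BTop (l : lvec) : zvec := fun a => - l.1 a - l.2 a.
Definition MplusT (x : xvec) : zvec := fun a => x (src a) + x (dst a).
Definition ldot (u v : lvec) : R :=
  \sum_(a : darc) (dotv (u.1 a) (v.1 a) + dotv (u.2 a) (v.2 a)).

Variables (rho : 'I_N -> 'I_N -> R) (omega : 'I_N -> R).
Definition rho_arc (a : darc) : R := rho (src a) (dst a).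
Definition rhohat (i j : 'I_N) : R := (rho i j + rho j i) / 2.

Definition gnorm (v : lvec) : R :=
  \sum_(a : darc) rho_arc a * (sqn (v.1 a) + sqn (v.2 a)).
Definition Gam (v : lvec) : lvec :=
  (fun a => rho_arc a *: v.1 a, fun a => rho_arc a *: v.2 a).
Definition Gaminv (v : lvec) : lvec :=
  (fun a => (rho_arc a)^-1 *: v.1 a, fun a => (rho_arc a)^-1 *: v.2 a).
Definition onorm (x : xvec) : R := \sum_(i < N) omega i * sqn (x i).

Definition beta (i : 'I_N) : R :=
  2 * (\sum_(j < N | adj i j) rhohat i j + omega i / 2).

Definition Wmx : 'M[R]_N :=
  \matrix_(i, j) (if adj i j then (rho i j + rho j i) / beta i
                  else if i == j then omega i / beta i else 0).

Variables (g : 'I_N -> blk -> R) (dg : 'I_N -> blk -> blk)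
          (h : 'I_N -> blk -> \bar R).

Definition Gdot (xr y : xvec) : R := \sum_(i < N) dotv (dg i (xr i)) (y i - xr i).
Definition hsum (y : xvec) : \bar R := (\sum_(i < N) h i (y i))%E.

Definition xobj (xr : xvec) (zr : zvec) (lr : lvec) (y : xvec) : \bar R :=
  ((Gdot xr y + ldot lr (ladd (Aop y) (Bop zr))
    + 2^-1 * gnorm (ladd (Aop y) (Bop zr))
    + 2^-1 * onorm (fun i => y i - xr i))%:E + hsum y)%E.

Definition zobj (xn : xvec) (lr : lvec) (w : zvec) : R :=
  2^-1 * gnorm (ladd (ladd (Aop xn) (Bop w)) (Gaminv lr)).

Definition PGC_run (x : nat -> xvec) (z : nat -> zvec) (l : nat -> lvec) : Prop :=
  [/\ (forall a, BTop (l 0%N) a = 0),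
      (forall a, z 0%N a = 2^-1 *: MplusT (x 0%N) a)
    & forall r : nat,
      [/\ (forall y, (xobj (x r) (z r) (l r) (x r.+1) <= xobj (x r) (z r) (l r) y)%E),
          (forall w, zobj (x r.+1) (l r) (z r.+1) <= zobj (x r.+1) (l r) w)
        & l r.+1 = ladd (l r) (Gam (ladd (Aop (x r.+1)) (Bop (z r.+1))))]].

End PGC.

From Pilot Require Import Defs.
From HB Require Import structures.
From mathcomp Require Import all_boot all_order all_algebra.
From mathcomp Require Import all_classical all_reals all_analysis.
From mathcomp Require Import ring lra.
Import Order.TTheory GRing.Theory Num.Theory.
Local Open Scope ring_scope.

(* The z-update has the closed form z^{r+1}_{ij} = (x^{r+1}_i + x^{r+1}_j)/2
   + (lambda_1 + lambda_2)_{ij} / (2 rho_ij), and B^T lambda^0 = 0 makes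
   lambda_1 + lambda_2 = 0 an invariant of the lambda-update.  Hence z^r is the
   edge midpoint of x^r, and each lambda-update adds a multiple of
   x^{r+1}_i - x^{r+1}_j.  The x-update minimises h plus a quadratic, so its
   first-order optimality condition says that minus the i-th block gradient of
   the quadratic part, zeta^{r+1}_i, is a subgradient of h_i at x^{r+1}_i.
   Subtracting two consecutive optimality conditions eliminates lambda and z,
   and dividing by beta_i gives the recursion with the mixing matrix W. *)

Set Implicit Arguments. Unset Strict Implicit. Unset Printing Implicit Defensive.

Section InnerProduct.
Variables (R : realType) (M : nat).
Local Notation blk := 'rV[R]_M.

Lemma dotvE (u v : blk) : dotv u v = \sum_k u 0 k * v 0 k.
Proof. by rewrite /dotv !mxE; apply: eq_bigr => k _; rewrite mxE. Qed.

Lemma dotvDl (u v w : blk) : dotv (u + v) w = dotv u w + dotv v w.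
Proof. by rewrite !dotvE -big_split; apply: eq_bigr => k _; rewrite mxE mulrDl. Qed.

Lemma dotvNl (u w : blk) : dotv (- u) w = - dotv u w.
Proof. by rewrite !dotvE -sumrN; apply: eq_bigr => k _; rewrite mxE mulNr. Qed.

Lemma dotv0l (w : blk) : dotv 0 w = 0.
Proof. by rewrite dotvE big1 // => k _; rewrite mxE mul0r. Qed.

Lemma dotv_suml (I : finType) (f : I -> blk) w :
  dotv (\sum_a f a) w = \sum_a dotv (f a) w.
Proof.
rewrite dotvE; under eq_bigr do rewrite summxE mulr_suml.
by rewrite exchange_big; apply: eq_bigr => a _; rewrite dotvE.
Qed.

Lemma sqn_ge0 (u : blk) : 0 <= sqn u.
Proof. by rewrite /sqn dotvE sumr_ge0 // => k _; rewrite -expr2 sqr_ge0. Qed.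

Lemma sqn_eq0 (u : blk) : (sqn u == 0) = (u == 0).
Proof.
apply/idP/eqP => [|->]; last by rewrite /sqn dotv0l.
rewrite /sqn dotvE psumr_eq0 => [/allP u0|k _]; last by rewrite -expr2 sqr_ge0.
apply/rowP => k; rewrite mxE; apply/eqP; rewrite -sqrf_eq0 expr2.
exact: u0 (mem_index_enum k).
Qed.

Lemma sqn_midpoint (p q v : blk) :
  sqn (p - v) + sqn (q - v)
  = 2 * sqn (v - 2^-1 *: (p + q)) + (sqn (p - 2^-1 *: (p + q)) + sqn (q - 2^-1 *: (p + q))).
Proof.
rewrite /sqn !dotvE mulr_sumr -!big_split /=.
by apply: eq_bigr => k _; rewrite !mxE; field.
Qed.

End InnerProduct.

Section ArcSums.
Variables (N : nat) (adj : rel 'I_N) (V : nmodType).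

Lemma sum_darc (F : 'I_N * 'I_N -> V) :
  \sum_(a : darc adj) F (val a) = \sum_(p | adj p.1 p.2) F p.
Proof.
rewrite [RHS](reindex_omap (val : darc adj -> _) insub); last first.
  by move=> p Pp; rewrite insubT.
by apply: eq_bigl => -[p Pp] /=; rewrite Pp insubT /= eqxx.
Qed.

Lemma sum_darc_src (i : 'I_N) (F : 'I_N -> 'I_N -> V) :
  \sum_(a : darc adj) (if src a == i then F (src a) (dst a) else 0)
  = \sum_(j | adj i j) F i j.
Proof.
rewrite (sum_darc (fun p => if p.1 == i then F p.1 p.2 else 0)).
rewrite -(pair_big_dep xpredT adj (fun a b => if a == i then F a b else 0)) /=.
rewrite (bigD1 i) //= [X in _ + X]big1 ?addr0; last first.
  by move=> a ai; apply: big1 => j _; rewrite (negbTE ai).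
by apply: eq_bigr => j _; rewrite eqxx.
Qed.

Lemma sum_darc_dst (i : 'I_N) (F : 'I_N -> 'I_N -> V) :
  \sum_(a : darc adj) (if dst a == i then F (src a) (dst a) else 0)
  = \sum_(j | adj j i) F j i.
Proof.
rewrite (sum_darc (fun p => if p.2 == i then F p.1 p.2 else 0)).
rewrite -(pair_big_dep xpredT adj (fun a b => if b == i then F a b else 0)) /=.
rewrite [RHS]big_mkcond; apply: eq_bigr => a _.
rewrite big_mkcond (bigD1 i) //= [X in _ + X]big1 ?addr0; last first.
  by move=> b bi; rewrite (negbTE bi); case: ifP.
by rewrite eqxx.
Qed.

End ArcSums.

Lemma ler_of_ler_addMt (R : realFieldType) (A B K : R) : 0 <= K ->
  (forall t, 0 < t < 1 -> A <= B + t * K) -> A <= B.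
Proof.
move=> K0 AB; apply/ler_addgt0Pr => e e0.
have D : 0 < e + K + 1 by lra.
pose t := e / (e + K + 1).
have t0 : 0 < t by rewrite divr_gt0.
have t1 : t < 1 by rewrite ltr_pdivrMr // mul1r; lra.
have tK : t * K <= e by rewrite mulrAC ler_pdivrMr //; nra.
by have := AB t; rewrite t0 t1 => /(_ isT); lra.
Qed.

Section ZUpdate.
Variables (R : realType) (N M : nat) (adj : rel 'I_N) (rho : 'I_N -> 'I_N -> R).
Hypothesis rho_arc_gt0 : forall a : darc adj, 0 < rho_arc rho a.

Lemma zobj_argmin (xn : xvec R N M) (lr : lvec R M adj) (zn : zvec R M adj) :
  (forall w, zobj rho xn lr zn <= zobj rho xn lr w) ->
  forall a, zn a = 2^-1 *: (xn (src a) + xn (dst a)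
                            + (rho_arc rho a)^-1 *: (lr.1 a + lr.2 a)).
Proof.
move=> zmin a; set r := rho_arc rho a.
pose p := xn (src a) + r^-1 *: lr.1 a.
pose q := xn (dst a) + r^-1 *: lr.2 a.
rewrite [r^-1 *: _]scalerDr addrACA -/p -/q; set m := 2^-1 *: (p + q).
pose T (v : zvec R M adj) b := rho_arc rho b *
  (sqn (xn (src b) + - v b + (rho_arc rho b)^-1 *: lr.1 b)
   + sqn (xn (dst b) + - v b + (rho_arc rho b)^-1 *: lr.2 b)).
have Ta v : T v a = r * (sqn (p - v a) + sqn (q - v a)).
  by rewrite /T -/r /p /q (addrAC (xn (src a))) (addrAC (xn (dst a))).
pose w b := if b == a then m else zn b.
have zobjE v : zobj rho xn lr v = 2^-1 * \sum_b T v b by [].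
have := zmin w; rewrite !zobjE (bigD1 a) //= [X in _ <= _ * X](bigD1 a) //=.
rewrite [X in _ <= _ * (_ + X)](eq_bigr (T zn)); last first.
  by move=> b ba; rewrite /T /w (negbTE ba).
rewrite ler_pM2l ?invr_gt0 ?ltr0n // lerD2r !Ta /w eqxx (ler_pM2l (rho_arc_gt0 a)).
rewrite [X in X <= _](sqn_midpoint p q) -/m -[X in _ <= X]add0r lerD2r.
rewrite pmulr_rle0 // => zm.
by apply/eqP; rewrite -subr_eq0 -sqn_eq0 eq_le zm sqn_ge0.
Qed.

End ZUpdate.

Section FirstOrderOptimality.
Variables (R : realType) (M : nat).
Local Notation blk := 'rV[R]_M.

Lemma subdiff_of_line_min (f : blk -> \bar R) (y G : blk) (K : blk -> R) :
  convex_ext f -> (forall u, f u != -oo%E) -> f y \is a fin_num ->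
  (forall v, 0 <= K v) ->
  (forall v t, 0 < t < 1 ->
     (f y <= (t * dotv G (v - y) + t ^+ 2 * K v)%:E + f (y + t *: (v - y))%R)%E) ->
  subdiff f y (- G).
Proof.
move=> f_cvx f_Noo fy K_ge0 fy_min v.
case fv: (f v) => [b| |]; [| by rewrite leey | by have := f_Noo v; rewrite fv].
rewrite -(fineK fy) -EFinD lee_fin dotvNl; set a := fine (f y).
suff: a - b <= dotv G (v - y) by lra.
apply: (ler_of_ler_addMt (K_ge0 v)) => t /andP[t0 t1].
have fw : (f (y + t *: (v - y))%R <= (t * b + (1 - t) * a)%:E)%E.
  have := f_cvx v y t; rewrite t0 t1 => /(_ isT).
  by rewrite scalerBl scale1r addrCA -scalerBr fv -(fineK fy) -!EFinM -EFinD.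
have := le_trans (fy_min v t (introT andP (conj t0 t1))) (leeD2l _ fw).
rewrite -(fineK fy) -EFinD lee_fin -/a => ineq.
have : t * (a - b - (dotv G (v - y) + t * K v)) <= 0 by nra.
by rewrite pmulr_rle0 // subr_le0.
Qed.

End FirstOrderOptimality.

Ltac dotv_coordwise := rewrite /sqn ?dotvE;
  do 4 rewrite ?mulr_sumr -?sumrN -?big_split /=; apply: eq_bigr => ? _; rewrite ?mxE.

Section XUpdate.
Variables (R : realType) (N M : nat) (adj : rel 'I_N).
Variables (rho : 'I_N -> 'I_N -> R) (omega : 'I_N -> R).
Variables (dg : 'I_N -> 'rV[R]_M -> 'rV[R]_M) (h : 'I_N -> 'rV[R]_M -> \bar R).
Variables (xr : xvec R N M) (zr : zvec R M adj) (lr : lvec R M adj).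
Local Notation blk := 'rV[R]_M.

Definition xsmooth (y : xvec R N M) : R :=
  Gdot dg xr y + ldot lr (ladd (Aop adj y) (Bop zr))
  + 2^-1 * Defs.gnorm rho (ladd (Aop adj y) (Bop zr))
  + 2^-1 * onorm omega (fun k => y k - xr k).

Lemma xobjE y : xobj rho omega dg h xr zr lr y = ((xsmooth y)%:E + hsum h y)%E.
Proof. by []. Qed.

(* The sum over arcs is the i-th block of A^T (lambda + Gamma (A y + B z)). *)
Definition xgrad (y : xvec R N M) (i : 'I_N) : blk :=
  dg i (xr i) + omega i *: (y i - xr i)
  + \sum_(a : darc adj)
      ((if src a == i then lr.1 a + rho_arc rho a *: (y i - zr a) else 0)
       + (if dst a == i then lr.2 a + rho_arc rho a *: (y i - zr a) else 0)).

Definition xcurv (i : 'I_N) (d : blk) : R :=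
  2^-1 * omega i * sqn d
  + \sum_(a : darc adj) 2^-1 * rho_arc rho a
      * ((if src a == i then sqn d else 0) + (if dst a == i then sqn d else 0)).

Lemma xsmooth_update (y : xvec R N M) i t d :
  xsmooth (fun k => if k == i then y i + t *: d else y k)
  = xsmooth y + t * dotv (xgrad y i) d + t ^+ 2 * xcurv i d.
Proof.
set upd := fun k => _.
pose psi k (u : blk) :=
  dotv (dg k (xr k)) (u - xr k) + 2^-1 * (omega k * sqn (u - xr k)).
pose phi (a : darc adj) (u v : blk) :=
  dotv (lr.1 a) (u + - zr a) + dotv (lr.2 a) (v + - zr a)
  + 2^-1 * (rho_arc rho a * (sqn (u + - zr a) + sqn (v + - zr a))).
pose ga (a : darc adj) :=
  (if src a == i then lr.1 a + rho_arc rho a *: (y i - zr a) else 0)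
  + (if dst a == i then lr.2 a + rho_arc rho a *: (y i - zr a) else 0).
pose ka (a : darc adj) := 2^-1 * rho_arc rho a
  * ((if src a == i then sqn d else 0) + (if dst a == i then sqn d else 0)).
have xsmoothE y' : xsmooth y'
    = \sum_k psi k (y' k) + \sum_a phi a (y' (src a)) (y' (dst a)).
  rewrite /xsmooth /Gdot /ldot /Defs.gnorm /onorm /psi /phi !mulr_sumr !big_split /=.
  lra.
have psi_upd : psi i (y i + t *: d) = psi i (y i)
    + t * dotv (dg i (xr i) + omega i *: (y i - xr i)) d
    + t ^+ 2 * (2^-1 * omega i * sqn d).
  by rewrite /psi; dotv_coordwise; field.
have phi_upd a : phi a (upd (src a)) (upd (dst a))
    = phi a (y (src a)) (y (dst a)) + (t * dotv (ga a) d + t ^+ 2 * ka a).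
  rewrite /phi /upd /ga /ka.
  by case: eqP => [->|_]; case: eqP => [->|_];
    rewrite ?addr0 ?add0r ?dotv0l ?mulr0 ?mul0r ?addr0; dotv_coordwise; field.
rewrite !xsmoothE (bigD1 i) //= [in RHS](bigD1 i) //= {1}/upd eqxx psi_upd.
rewrite (eq_bigr _ (fun a _ => phi_upd a)).
rewrite [X in _ + X + _ = _](eq_bigr (fun k => psi k (y k))); last first.
  by move=> k /negbTE ki; rewrite /upd ki.
rewrite [\sum_a (phi _ _ _ + _)]big_split [\sum_a (t * _ + _)]big_split /=.
rewrite -!mulr_sumr -dotv_suml /xgrad /xcurv !dotvDl.
lra.
Qed.

Hypothesis rho_arc_gt0 : forall a : darc adj, 0 < rho_arc rho a.
Hypothesis omega_ge0 : forall i, 0 <= omega i.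
Hypothesis h_cvx : forall i, convex_ext (h i).
Hypothesis h_proper : forall i, proper_ext (h i).

Lemma xcurv_ge0 i d : 0 <= xcurv i d.
Proof.
have sqn_if_ge0 (b : bool) : 0 <= if b then sqn d else 0 by case: b; rewrite ?sqn_ge0.
apply: addr_ge0; first by rewrite !mulr_ge0 ?sqn_ge0.
by apply: sumr_ge0 => a _; rewrite !mulr_ge0 ?addr_ge0 // ltW.
Qed.

Section Argmin.
Variable y : xvec R N M.
Hypothesis y_min : forall y', (xobj rho omega dg h xr zr lr y <= xobj rho omega dg h xr zr lr y')%E.

Lemma xobj_argmin_fin i : h i (y i) \is a fin_num.
Proof.
have hNoo k u : h k u != -oo%E by case: (h_proper k).
have /choice[u0 fin_u0] : forall k, exists u, h k u \is a fin_num.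
  by move=> k; case: (h_proper k).
have fin_sum0 : hsum h u0 \is a fin_num by apply/sum_fin_numP => k _ _; exact: fin_u0.
have fin_sum : hsum h y \is a fin_num.
  rewrite fin_numE; apply/andP; split.
    apply: (big_ind (fun e => e != -oo)%E) => // a b aNoo bNoo.
    by rewrite adde_eq_ninfty negb_or aNoo bNoo.
  apply/negP => /eqP sum_oo; have := y_min u0.
  by rewrite !xobjE sum_oo addey // -(fineK fin_sum0) -EFinD leye_eq.
by move/sum_fin_numP: fin_sum; apply; rewrite ?mem_index_enum.
Qed.

Lemma xobj_argmin_subdiff i : subdiff (h i) (y i) (- xgrad y i).
Proof.
apply: (subdiff_of_line_min (K := fun v => xcurv i (v - y i))) => //;
  [by case: (h_proper i) | exact: xobj_argmin_fin | by move=> v; exact: xcurv_ge0 |].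
move=> v t _; set w := (y i + t *: (v - y i))%R.
pose upd k := if k == i then w else y k.
have hsum_split y' : hsum h y' = (h i (y' i) + \sum_(k < N | k != i) h k (y' k))%E.
  by rewrite /hsum (bigD1 i).
have rest_upd : (\sum_(k < N | k != i) h k (upd k) = \sum_(k < N | k != i) h k (y k))%E.
  by apply: eq_bigr => k /negbTE ki; rewrite /upd ki.
have := y_min upd; rewrite !xobjE xsmooth_update !hsum_split rest_upd {1}/upd eqxx.
rewrite -(EFin_sum_fine _ (fun k _ => xobj_argmin_fin k)) -(fineK (xobj_argmin_fin i)).
case hw: (h i w) => [c| |]; last 2 first.
- by rewrite addey ?leey.
- by have := (h_proper i).1 w; rewrite hw.
by rewrite -!EFinD !lee_fin => ?; lra.
Qed.

End Argmin.
End XUpdate.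

Section MixingMatrix.
Variables (R : realType) (N : nat) (adj : rel 'I_N).
Variables (rho : 'I_N -> 'I_N -> R) (omega : 'I_N -> R).

Lemma betaE i : beta adj rho omega i = \sum_(j | adj i j) (rho i j + rho j i) + omega i.
Proof.
rewrite /beta /rhohat mulrDr mulr_sumr; congr (_ + _); last by field.
by apply: eq_bigr => j _; field.
Qed.

Lemma sum_WmxZ M (u : 'I_N -> 'rV[R]_M) i : irreflexive adj ->
  \sum_j Wmx adj rho omega i j *: u j = (beta adj rho omega i)^-1 *:
    (\sum_(j | adj i j) (rho i j + rho j i) *: u j + omega i *: u i).
Proof.
move=> adj_irr; rewrite scalerDr scaler_sumr big_mkcond /=.
rewrite (eq_bigr (fun j =>
   (if adj i j then (beta adj rho omega i)^-1 *: ((rho i j + rho j i) *: u j) else 0)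
   + (if j == i then (beta adj rho omega i)^-1 *: (omega i *: u j) else 0))); last first.
  move=> j _; rewrite mxE; case: ifP => [aij|_].
    have -> : (j == i) = false by apply: contraTF aij => /eqP ->; rewrite adj_irr.
    by rewrite addr0 scalerA mulrC.
  by rewrite add0r eq_sym; case: eqP => [->|_]; rewrite ?scale0r // scalerA mulrC.
by rewrite big_split /= -!big_mkcond big_pred1_eq.
Qed.

End MixingMatrix.

Section PGCRun.
Variables (R : realType) (N M : nat) (adj : rel 'I_N).
Variables (rho : 'I_N -> 'I_N -> R) (omega : 'I_N -> R).
Variables (dg : 'I_N -> 'rV[R]_M -> 'rV[R]_M) (h : 'I_N -> 'rV[R]_M -> \bar R).
Variables (x : nat -> xvec R N M) (z : nat -> zvec R M adj) (l : nat -> lvec R M adj).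
Hypothesis adj_sym : symmetric adj.
Hypothesis rho_arc_gt0 : forall a : darc adj, 0 < rho_arc rho a.
Hypothesis run : PGC_run rho omega dg h x z l.

Lemma PGC_z_update r a : z r.+1 a = 2^-1 *: (x r.+1 (src a) + x r.+1 (dst a)
  + (rho_arc rho a)^-1 *: ((l r).1 a + (l r).2 a)).
Proof. by case: run => _ _ /(_ r)[_ z_min _]; exact: zobj_argmin. Qed.

Lemma PGC_lambda_sum r a : (l r).1 a + (l r).2 a = 0.
Proof.
case: r => [|r].
  by case: run => /(_ a) /eqP; rewrite /BTop -opprD oppr_eq0 => /eqP.
case: run => _ _ /(_ r)[_ _ ->] /=; rewrite PGC_z_update.
have ra0 : rho_arc rho a != 0 by rewrite gt_eqF.
by apply/rowP => k; rewrite !mxE; field.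
Qed.

Lemma PGC_lambda2 r a : (l r).2 a = - (l r).1 a.
Proof. by apply/eqP; rewrite -addr_eq0 addrC PGC_lambda_sum. Qed.

Lemma PGC_z_mid r a : z r a = 2^-1 *: (x r (src a) + x r (dst a)).
Proof.
case: r => [|r]; first by case: run => _ ->.
by rewrite PGC_z_update PGC_lambda_sum scaler0 addr0.
Qed.

Lemma PGC_lambda1_update r a : (l r.+1).1 a
  = (l r).1 a + (2^-1 * rho_arc rho a) *: (x r.+1 (src a) - x r.+1 (dst a)).
Proof.
case: run => _ _ /(_ r)[_ _ ->] /=; rewrite PGC_z_mid.
by apply/rowP => k; rewrite !mxE; field.
Qed.

Definition PGC_xgrad r := xgrad rho omega dg (x r) (z r) (l r) (x r.+1).

Lemma PGC_xgrad_diff r i : PGC_xgrad r.+1 i - PGC_xgrad r i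
  = dg i (x r.+1 i) - dg i (x r i)
    + omega i *: (x r.+2 i - x r.+1 i - (x r.+1 i - x r i))
    + \sum_(j | adj i j) (rho i j + rho j i)
        *: (x r.+2 i - x r.+1 i - x r.+1 j + 2^-1 *: (x r i + x r j)).
Proof.
pose E j := x r.+2 i - x r.+1 i - x r.+1 j + 2^-1 *: (x r i + x r j).
have arcs_diff : \sum_(a : darc adj)
     ((if src a == i then (l r.+1).1 a + rho_arc rho a *: (x r.+2 i - z r.+1 a) else 0)
      + (if dst a == i then (l r.+1).2 a + rho_arc rho a *: (x r.+2 i - z r.+1 a) else 0))
   - \sum_(a : darc adj)
     ((if src a == i then (l r).1 a + rho_arc rho a *: (x r.+1 i - z r a) else 0)
      + (if dst a == i then (l r).2 a + rho_arc rho a *: (x r.+1 i - z r a) else 0))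
   = \sum_(j | adj i j) (rho i j + rho j i) *: E j.
  rewrite -sumrB (eq_bigr (fun a =>
      (if src a == i then rho (src a) (dst a) *: E (dst a) else 0)
      + (if dst a == i then rho (src a) (dst a) *: E (src a) else 0))); last first.
    move=> a _; rewrite !PGC_lambda2 !PGC_lambda1_update !PGC_z_mid /E /rho_arc.
    by case: eqP => [->|_]; case: eqP => [->|_];
      apply/rowP => k; rewrite !(mxE, summxE); field.
  rewrite big_split /= (sum_darc_src adj i (fun p q => rho p q *: E q)).
  rewrite (sum_darc_dst adj i (fun p q => rho p q *: E p)).
  rewrite [X in _ + X](eq_bigl (adj i)) => [|j]; last by rewrite adj_sym.
  by rewrite -big_split; apply: eq_bigr => j _; rewrite scalerDl.
rewrite /PGC_xgrad /xgrad -arcs_diff.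
set S1 := \sum_(a : darc adj) _; set S0 := \sum_(a : darc adj) _.
by apply/rowP => k; rewrite !mxE; ring.
Qed.

Definition PGC_zeta r i := if r is r'.+1 then - PGC_xgrad r' i else 0.

Hypothesis omega_ge0 : forall i, 0 <= omega i.
Hypothesis h_cvx : forall i, convex_ext (h i).
Hypothesis h_proper : forall i, proper_ext (h i).

Lemma PGC_zeta_subdiff r : (1 <= r)%N -> forall i, subdiff (h i) (x r i) (PGC_zeta r i).
Proof.
case: r => // r _ i; case: run => _ _ /(_ r)[x_min _ _].
exact: xobj_argmin_subdiff rho_arc_gt0 omega_ge0 h_cvx h_proper _ x_min i.
Qed.

Hypothesis adj_irr : irreflexive adj.
Hypothesis beta_gt0 : forall i, 0 < beta adj rho omega i.

Lemma PGC_recursion r : (1 <= r)%N -> forall i,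
  x r.+1 i - x r i + (beta adj rho omega i)^-1 *: (PGC_zeta r.+1 i - PGC_zeta r i)
  = (beta adj rho omega i)^-1 *: (- dg i (x r i) + dg i (x r.-1 i))
    + \sum_(j < N) Wmx adj rho omega i j *: x r j
    - 2^-1 *: (x r.-1 i + \sum_(j < N) Wmx adj rho omega i j *: x r.-1 j).
Proof.
case: r => // q _ i /=; rewrite -opprD PGC_xgrad_diff.
have sum_expand : \sum_(j | adj i j) (rho i j + rho j i)
        *: (x q.+2 i - x q.+1 i - x q.+1 j + 2^-1 *: (x q i + x q j))
   = (\sum_(j | adj i j) (rho i j + rho j i)) *: (x q.+2 i - x q.+1 i + 2^-1 *: x q i)
     - \sum_(j | adj i j) (rho i j + rho j i) *: x q.+1 j
     + 2^-1 *: \sum_(j | adj i j) (rho i j + rho j i) *: x q j.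
  rewrite scaler_suml scaler_sumr -sumrB -big_split /=; apply: eq_bigr => j _.
  by apply/rowP => k; rewrite !mxE; ring.
rewrite sum_expand !sum_WmxZ //.
have := betaE adj rho omega i; have := beta_gt0 i.
set b := beta adj rho omega i; set C := \sum_(j | adj i j) _.
set S1 := \sum_(j | adj i j) _ *: x q.+1 j; set S0 := \sum_(j | adj i j) _ *: x q j.
move=> /lt0r_neq0 b0 /eqP; rewrite -subr_eq => /eqP <-.
by apply/rowP => k; rewrite !mxE; move: b b0 => b b0; field.
Qed.

End PGCRun.

Unset Implicit Arguments.

Theorem proposition3p1 (R : realType) (N M : nat) (adj : rel 'I_N)
  (rho : 'I_N -> 'I_N -> R) (omega : 'I_N -> R)
  (g : 'I_N -> 'rV[R]_M -> R) (dg : 'I_N -> 'rV[R]_M -> 'rV[R]_M)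
  (h : 'I_N -> 'rV[R]_M -> \bar R)
  (x : nat -> 'I_N -> 'rV[R]_M) (z : nat -> darc adj -> 'rV[R]_M)
  (l : nat -> lvec R M adj) :
  (0 < N)%N -> (0 < M)%N ->
  simple_undirected_connected adj ->
  (forall i j, adj i j -> 0 < rho i j) ->
  (forall i, 0 <= omega i) ->
  (forall i, 0 < beta adj rho omega i) ->
  (forall i, convex_real (g i) /\ is_gradient (g i) (dg i)) ->
  (forall i, convex_ext (h i) /\ proper_ext (h i)) ->
  PGC_run rho omega dg h x z l ->
  exists zeta : nat -> 'I_N -> 'rV[R]_M,
    (forall r, (1 <= r)%N -> forall i, subdiff (h i) (x r i) (zeta r i)) /\
    (forall r, (1 <= r)%N -> forall i : 'I_N,
       x r.+1 i - x r i + (beta adj rho omega i)^-1 *: (zeta r.+1 i - zeta r i)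
       = (beta adj rho omega i)^-1 *: (- dg i (x r i) + dg i (x r.-1 i))
         + \sum_(j < N) Wmx adj rho omega i j *: x r j
         - 2^-1 *: (x r.-1 i + \sum_(j < N) Wmx adj rho omega i j *: x r.-1 j)).
Proof.
move=> _ _ [adj_sym [adj_irr _]] rho_gt0 omega_ge0 beta_gt0 _ h_cvx_proper run.
have rho_arc_gt0 (a : darc adj) : 0 < rho_arc rho a by apply: rho_gt0; exact: (valP a).
have h_cvx i : convex_ext (h i) by case: (h_cvx_proper i).
have h_proper i : proper_ext (h i) by case: (h_cvx_proper i).
exists (PGC_zeta rho omega dg x z l); split.
  exact: PGC_zeta_subdiff rho_arc_gt0 run omega_ge0 h_cvx h_proper.
exact: PGC_recursion adj_sym rho_arc_gt0 run adj_irr beta_gt0.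
Qed.
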